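(* Among the $q^{TM}$ distinct assignments of the matrix $S\in\mathbb{F}(q)^{T\times M}$, at most a fraction $q^{-1}\binom{n}{k}TM$ of them induce a matrix $Q_A\cdot G$ of rank less than $M$ for some set $A\subset I_n$ with $|A|=n-k$. (Consequently, if $q>\binom{n}{k}TM$, there exists an assignment of $S$ for which $Q_A\cdot G$ has rank $M$ for every such $A$.)
   Context: Fix a balanced incomplete block design $(I_n,\mathcal{B})\in S_\lambda(2,r,n)$ (every element of $I_n=\{1,\dots,n\}$ lies in the same number of blocks, each block has $r$ elements, every pair of elements lies in exactly $\lambda$ blocks), with blocks $B_1,\dots,B_{N^*}$, where $N^*=\lambda n(n-1)/(r(r-1))$. For $A\subset I_n$ with $|A|=n-k$ define $T(A)=\sum_{B\in\mathcal{B}:|B\cap A|\ge 2}(|B\cap A|-1)$ and $T=\max_{A\subseteq I_n,|A|=n-k}T(A)$. Let $M=(r-1)N^*-T$. The $M$ information symbols form a vector $\vec d\in\mathbb{F}(q)^M$; with $S\in\mathbb{F}(q)^{T\times M}$ and $G=[I,S^t]^t$ (size $(r-1)N^*\times M$), the vector $G\vec d$ is written column-wise into an $(r-1)\times N^*$ matrix $D$. For each column $j$ a parity symbol $P_j=\sum_{i=1}^{r-1}D_{i,j}$ is formed, and the $r$ symbols $(D_{1,j},\dots,D_{r-1,j},P_j)$ (the $j$-th parity group) are stored one per disk on the disks of block $B_j$. Let $R=[I,\vec 1^t]^t$ be the $r\times(r-1)$ matrix consisting of the $(r-1)\times(r-1)$ identity with an all-ones row appended. For the set $A$ of inaccessible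 disks and each $j$: if $|B_j\cap A|\le 1$, let $R_j$ be $R$ with its last row set to zero; if $|B_j\cap A|\ge 2$, let $R_j$ be $R$ with only the rows corresponding to the symbols of parity group $j$ stored on disks in $B_j\setminus A$ kept and all other rows set to zero. Let $Q_A$ be the $(rN^* )\times(r-1)N^*$ block-diagonal matrix with diagonal blocks $R_1,\dots,R_{N^*}$. Then $Q_A G\vec d$ is the vector of information obtainable when disks in $A$ are inaccessible, so $\vec d$ is decodable iff $Q_A G$ has rank $M$. *)

From HB Require Import structures.
From mathcomp Require Import all_boot all_order all_algebra.
Set Implicit Arguments. Unset Strict Implicit. Unset Printing Implicit Defensive.
Import GRing.Theory.
Local Open Scope ring_scope.

(* The disks are I_n = 'I_n (0-based).  The design has N = N^* blocks,
   indexed by 'I_N, block j being B j : {set 'I_n}. *)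

Definition is_bibd (n r lam N : nat) (B : 'I_N -> {set 'I_n}) : Prop :=
  [/\ (forall j, #|B j| = r),
      (exists rho : nat, forall x : 'I_n, #|[set j | x \in B j]| = rho)
    & (forall x y : 'I_n, x != y ->
          #|[set j | (x \in B j) && (y \in B j)]| = lam)].

(* place j s = the disk of block B j on which the s-th symbol (s < r) of the
   j-th parity group is stored (symbols 0..r-2 = D_{.,j}, symbol r-1 = P_j);
   this must be a bijection 'I_r -> B j. *)
Definition valid_placement (n r N : nat) (B : 'I_N -> {set 'I_n})
    (place : 'I_N -> 'I_r -> 'I_n) : Prop :=
  forall j, injective (place j) /\ (forall s, place j s \in B j).

Definition TA (n N : nat) (B : 'I_N -> {set 'I_n}) (A : {set 'I_n}) : nat :=
  (\sum_(j < N | 1 < #|B j :&: A|) (#|B j :&: A| - 1))%N.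

Definition Tmax (n N : nat) (k : nat) (B : 'I_N -> {set 'I_n}) : nat :=
  (\max_(A : {set 'I_n} | #|A| == n - k) TA B A)%N.

Definition Mdim (n N : nat) (k r : nat) (B : 'I_N -> {set 'I_n}) : nat :=
  ((r - 1) * N - Tmax k B)%N.

(* G = [I ; S], a ((r-1)N) x M matrix *)
Definition Gmat (F : fieldType) (n N k r : nat) (B : 'I_N -> {set 'I_n})
    (S : 'M[F]_(Tmax k B, Mdim k r B)) : 'M[F]_((r - 1) * N, Mdim k r B) :=
  \matrix_(p, c)
    if (p < Mdim k r B)%N then ((p == c :> nat)%:R : F)
    else oapp (fun t : 'I_(Tmax k B) => S t c) 0
              (insub (p - Mdim k r B)%N).

Definition Rmat (F : fieldType) (r : nat) : 'M[F]_(r, r - 1) :=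
  \matrix_(s, i) if (s < r - 1)%N then ((s == i :> nat)%:R : F) else 1.

Definition Rj (F : fieldType) (n r : nat) (Bj : {set 'I_n})
    (placej : 'I_r -> 'I_n) (A : {set 'I_n}) : 'M[F]_(r, r - 1) :=
  \matrix_(s, i)
    (if (if (#|Bj :&: A| <= 1)%N then (s < r - 1)%N else placej s \notin A)
     then Rmat F r s i else 0).

Lemma ord_mod_proof (m N : nat) (p : 'I_(m * N)) : (p %% m < m)%N.
Proof.
case: m p => [|m] p; last by rewrite ltn_mod.
by case: p.
Qed.

Lemma ord_div_proof (m N : nat) (p : 'I_(m * N)) : (p %/ m < N)%N.
Proof.
case: m p => [|m] p; first by case: p.
rewrite ltn_divLR //; have := ltn_ord p; move: (val p) => x; by rewrite mulnC.
Qed.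

Definition ord_mod (m N : nat) (p : 'I_(m * N)) : 'I_m := Ordinal (ord_mod_proof p).
Definition ord_div (m N : nat) (p : 'I_(m * N)) : 'I_N := Ordinal (ord_div_proof p).

(* Q_A = block-diagonal matrix with diagonal blocks R_1, ..., R_N
   (row j*r + s <-> block j row s; column j*(r-1) + i <-> block j column i,
   matching the column-wise writing of G d into the (r-1) x N matrix D). *)
Definition QA (F : fieldType) (n r N : nat) (B : 'I_N -> {set 'I_n})
    (place : 'I_N -> 'I_r -> 'I_n) (A : {set 'I_n}) : 'M[F]_(r * N, (r - 1) * N) :=
  \matrix_(p, c)
    if ord_div p == ord_div c
    then Rj F (B (ord_div p)) (place (ord_div p)) A (ord_mod p) (ord_mod c)
    else 0.

From HB Require Import structures.
From mathcomp Require Import all_boot all_order all_algebra.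
From mathcomp Require Import zify.
Set Implicit Arguments. Unset Strict Implicit. Unset Printing Implicit Defensive.
Import GRing.Theory.
Local Open Scope ring_scope.

(* Fix a set A of n - k inaccessible disks.  In block j the surviving rows of
   R_j contain the unit rows of the kept data symbols and, if the parity symbol
   survives, the all-ones row; together they give at least
   r - 1 - (|B_j ∩ A| - 1) independent columns, so rank Q_A >= (r-1)N - T(A) >= M.
   Writing G = [I; 0] + [0; I] S, we get Q_A G = X + Y S with rank [X | Y] >= M.
   Choosing S one row at a time (in the transposed picture), each new row must
   land in a proper affine subspace for the rank to stay deficient, so at most
   a fraction M/q of all S is bad for A.  A union bound over the C(n, k) sets A
   gives the estimate, and when it is below 1 a good S exists. *)

Lemma card_set_sum (T : finType) (P : pred T) :
  #|[set x | P x]| = (\sum_x (P x : nat))%N.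
Proof. by rewrite cardsE -sum1_card big_mkcond; apply: eq_bigr => x _; rewrite unfold_in. Qed.

Lemma card_exists_le (I T : finType) (P : pred I) (Q : I -> pred T) :
  (#|[set x | [exists i, P i && Q i x]]| <= \sum_(i | P i) #|[set x | Q i x]|)%N.
Proof.
under eq_bigr => i _ do rewrite card_set_sum.
rewrite card_set_sum exchange_big /=; apply: leq_sum => x _.
by case: existsP => [[i /andP[Pi Qix]] | //]; rewrite (bigD1 i) //= Qix.
Qed.

Lemma exists_notin_card_lt (T : finType) (D : {set T}) :
  (#|D| < #|T|)%N -> exists x, x \notin D.
Proof.
rewrite -(cardsC D) -{1}[#|D|]addn0 ltn_add2l => /card_gt0P[x].
by rewrite inE; exists x.
Qed.

Lemma card_le_mxrank (F : fieldType) m n (M : 'M[F]_(m, n)) (C : {set 'I_n})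
    (L : 'I_n -> 'rV[F]_m) :
  {in C &, forall c c', (L c *m M) 0 c' = (c == c')%:R} -> (#|C| <= \rank M)%N.
Proof.
move=> dualL.
pose Z : 'M[F]_(#|C|, m) := \matrix_(a, p) L (enum_val a) 0 p.
pose E : 'M[F]_(n, #|C|) := \matrix_(c, b) (c == enum_val b)%:R.
have ZME : Z *m M *m E = 1%:M.
  apply/matrixP => a b; rewrite mxE (bigD1 (enum_val b)) //= big1 => [|c /negbTE ncb].
    rewrite [E _ _]mxE eqxx mulr1 addr0 [RHS]mxE -(inj_eq enum_val_inj) -dualL ?enum_valP //.
    by rewrite !mxE; apply: eq_bigr => p _; rewrite mxE.
  by rewrite [X in _ * X]mxE ncb mulr0.
rewrite -[#|C|](mxrank1 F) -ZME.
exact: leq_trans (mxrankM_maxl _ _) (mxrankM_maxr _ _).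
Qed.

Lemma mxrank_col_mx_le (F : fieldType) m1 m2 n (A : 'M[F]_(m1, n)) (B : 'M[F]_(m2, n)) :
  (\rank (col_mx A B) <= \rank A + \rank B)%N.
Proof. by rewrite -addsmxE; apply: (mxrank_adds_leqif A B).1. Qed.

Lemma mxrank_col_mx_top_le (F : fieldType) m M n (x : 'rV[F]_n) (X' : 'M[F]_(M, n))
    (Y : 'M[F]_(m, n)) :
  (\rank (col_mx (col_mx x X') Y) <= (\rank (col_mx X' Y)).+1)%N.
Proof.
have xX'Y_sub : (col_mx (col_mx x X') Y <= col_mx x (col_mx X' Y))%MS.
  have x_sub := addsmxSl x (col_mx X' Y); have X'Y_sub := addsmxSr x (col_mx X' Y).
  have X'_sub := addsmxSl X' Y; have Y_sub := addsmxSr X' Y.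
  rewrite addsmxE in x_sub; rewrite addsmxE in X'Y_sub.
  rewrite addsmxE in X'_sub; rewrite addsmxE in Y_sub.
  by rewrite !col_mx_sub x_sub (submx_trans X'_sub X'Y_sub) (submx_trans Y_sub X'Y_sub).
apply: leq_trans (mxrankS xX'Y_sub) (leq_trans (mxrank_col_mx_le _ _) _).
by have := rank_leq_row x; lia.
Qed.

Definition natid (F : fieldType) m n : 'M[F]_(m, n) := \matrix_(i, j) (i == j :> nat)%:R.

Lemma mul_natid (F : fieldType) m n : (m <= n)%N -> natid F m n *m natid F n m = 1%:M.
Proof.
move=> le_mn; apply/matrixP => i i'; rewrite !mxE.
rewrite (bigD1 (widen_ord le_mn i)) //= !mxE eqxx mul1r big1 ?addr0 // => j ne_j.
rewrite !mxE; case: eqP => [eq_ij | _]; last by rewrite mul0r.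
by case/eqP: ne_j; apply: val_inj.
Qed.

Section BlockIndex.
Variable N : nat.

Lemma block_idx_proof m (j : 'I_N) (s : 'I_m) : (j * m + s < m * N)%N.
Proof. have := ltn_ord j; have := ltn_ord s; nia. Qed.

Definition block_idx m (j : 'I_N) (s : 'I_m) : 'I_(m * N) :=
  Ordinal (block_idx_proof j s).

Lemma ord_div_block_idx m (j : 'I_N) (s : 'I_m) : ord_div (block_idx j s) = j.
Proof.
apply: val_inj => /=; have s_lt := ltn_ord s.
by rewrite divnMDl ?(leq_ltn_trans (leq0n _) s_lt) // divn_small // addn0.
Qed.

Lemma ord_mod_block_idx m (j : 'I_N) (s : 'I_m) : ord_mod (block_idx j s) = s.
Proof. by apply: val_inj => /=; rewrite modnMDl modn_small. Qed.

Lemma ord_divmod_inj m (p p' : 'I_(m * N)) :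
  ord_div p = ord_div p' -> ord_mod p = ord_mod p' -> p = p'.
Proof.
move=> /(congr1 val) /= eq_div /(congr1 val) /= eq_mod.
by apply: val_inj; rewrite /= (divn_eq p m) (divn_eq p' m) eq_div eq_mod.
Qed.

Lemma card_block_set m (C : 'I_N -> {set 'I_m}) :
  #|[set p : 'I_(m * N) | ord_mod p \in C (ord_div p)]| = (\sum_j #|C j|)%N.
Proof.
rewrite card_set_sum (reindex (fun js : 'I_N * 'I_m => block_idx js.1 js.2)) /=.
  rewrite -(pair_bigA _ (fun j s =>
    (ord_mod (block_idx j s) \in C (ord_div (block_idx j s)) : nat))) /=.
  apply: eq_bigr => j _; rewrite -sum1_card [RHS]big_mkcond /=.
  by apply: eq_bigr => s _; rewrite ord_div_block_idx ord_mod_block_idx; case: (s \in C j).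
apply: onW_bij; exists (fun p => (ord_div p, ord_mod p)) => [[j s]|p] /=.
  by rewrite ord_div_block_idx ord_mod_block_idx.
by apply: ord_divmod_inj; rewrite ?ord_div_block_idx ?ord_mod_block_idx.
Qed.

End BlockIndex.

Section RankQA.
Variables (F : fieldType) (n r N : nat) (B : 'I_N -> {set 'I_n}).
Variables (place : 'I_N -> 'I_r -> 'I_n) (A : {set 'I_n}).
Hypothesis r_gt0 : (0 < r)%N.
Hypothesis place_valid : valid_placement B place.

Local Notation QA := (QA F B place A).

Definition wid (i : 'I_(r - 1)) : 'I_r := widen_ord (leq_subr 1 r) i.

Lemma wid_inj : injective wid.
Proof. by move=> i i' /(congr1 val) eq_val; apply: val_inj. Qed.

Lemma last_sym_proof : (r - 1 < r)%N. Proof. by rewrite ltn_subrL r_gt0. Qed.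

(* The parity symbol P_j is the last symbol of its group. *)
Definition last_sym : 'I_r := Ordinal last_sym_proof.

Definition keep (j : 'I_N) (s : 'I_r) : bool :=
  if (#|B j :&: A| <= 1)%N then (s < r - 1)%N else place j s \notin A.

Definition spare (j : 'I_N) : option 'I_(r - 1) := [pick i | ~~ keep j (wid i)].

Definition cols (j : 'I_N) : {set 'I_(r - 1)} :=
  [set i | keep j (wid i) || keep j last_sym && (spare j == Some i)].

(* The all-ones parity row minus the kept unit rows is the unit row of the
   spare column. *)
Definition dual (j : 'I_N) (i : 'I_(r - 1)) : 'rV[F]_(r * N) :=
  if keep j (wid i) then delta_mx 0 (block_idx j (wid i))
  else delta_mx 0 (block_idx j last_sym)
       - \sum_(i' | keep j (wid i')) delta_mx 0 (block_idx j (wid i')).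

Lemma QA_block_idx (j : 'I_N) (s : 'I_r) (c : 'I_((r - 1) * N)) :
  QA (block_idx j s) c =
  if (j == ord_div c) && keep j s then Rmat F r s (ord_mod c) else 0.
Proof.
by rewrite !mxE ord_div_block_idx ord_mod_block_idx /keep; case: (j == _).
Qed.

Lemma delta_mulQA (j : 'I_N) (s : 'I_r) (c : 'I_((r - 1) * N)) :
  ((delta_mx 0 (block_idx j s) : 'rV[F]_(r * N)) *m QA) 0 c =
  if (j == ord_div c) && keep j s then Rmat F r s (ord_mod c) else 0.
Proof. by rewrite -rowE mxE QA_block_idx. Qed.

Lemma Rmat_wid (i i' : 'I_(r - 1)) : Rmat F r (wid i) i' = (i == i')%:R.
Proof. by rewrite mxE /= ltn_ord. Qed.

Lemma Rmat_last_sym (i' : 'I_(r - 1)) : Rmat F r last_sym i' = 1.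
Proof. by rewrite mxE /= ltnn. Qed.

Lemma dual_mulQA (j : 'I_N) (i : 'I_(r - 1)) (c : 'I_((r - 1) * N)) :
  i \in cols j -> ord_mod c \in cols (ord_div c) ->
  (dual j i *m QA) 0 c = ((j == ord_div c) && (i == ord_mod c))%:R.
Proof.
rewrite /dual !inE => cols_i cols_c.
case: ifP cols_i => [kept _ | unkept /= /andP[kept_last /eqP spare_i]].
  by rewrite delta_mulQA kept andbT Rmat_wid; case: (j == _).
rewrite mulmxBl mulmx_suml [LHS]mxE [X in _ + X]mxE summxE delta_mulQA kept_last andbT.
have [eq_j | ne_j] := eqVneq j (ord_div c); last first.
  by rewrite big1 ?subr0 // => i' _; rewrite delta_mulQA (negbTE ne_j).
rewrite -eq_j /= Rmat_last_sym in cols_c *; set i' := ord_mod c in cols_c *.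
under eq_bigr => i'' kept'' do rewrite delta_mulQA -eq_j eqxx kept'' Rmat_wid.
have [kept' | unkept'] := boolP (keep j (wid i')).
  rewrite (bigD1 i') //= eqxx big1 => [|i'' /andP[_ /negbTE ->]] //.
  by rewrite addr0 subrr; case: eqP unkept => // ->; rewrite kept'.
move: cols_c; rewrite (negbTE unkept') spare_i => /andP[_ /eqP[<-]].
rewrite eqxx big1 ?subr0 // => i'' kept''.
by case: eqP kept'' => // ->; rewrite (negbTE unkept').
Qed.

Lemma sum_card_cols_le_rank : (\sum_j #|cols j| <= \rank QA)%N.
Proof.
rewrite -card_block_set.
apply: (card_le_mxrank (L := fun c => dual (ord_div c) (ord_mod c))) => c c'.
rewrite in_set => cols_c; rewrite in_set => cols_c'; rewrite dual_mulQA //.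
suff -> : (c == c') = (ord_div c == ord_div c') && (ord_mod c == ord_mod c') by [].
by apply/eqP/andP => [-> // | [/eqP ? /eqP ?]]; apply: ord_divmod_inj.
Qed.

Lemma card_unkept (j : 'I_N) : (#|~: [set s | keep j s]| <= maxn 1 #|B j :&: A|)%N.
Proof.
rewrite /keep; case: (leqP #|B j :&: A| 1) => [_ | lost_gt1].
  rewrite -[X in (_ <= X)%N](cards1 last_sym); apply/subset_leq_card/subsetP => s.
  rewrite !inE -leqNgt => s_ge.
  by apply/eqP/val_inj => /=; have := ltn_ord s; lia.
have [place_inj place_B] := place_valid j.
rewrite -(card_imset _ place_inj); apply/subset_leq_card/subsetP => x.
by case/imsetP => s; rewrite !inE negbK => lost ->; rewrite place_B.
Qed.

Lemma card_keep_split (j : 'I_N) :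
  #|[set s | keep j s]| = (keep j last_sym + #|[set i | keep j (wid i)]|)%N.
Proof.
rewrite (cardsD1 last_sym) inE -(card_imset _ wid_inj); congr (_ + _)%N.
apply: eq_card => s; rewrite !inE; apply/andP/imsetP => [[ne_last kept_s] | [i]].
  have s_lt : (s < r - 1)%N.
    have : (s != r - 1 :> nat)%N by apply: contra ne_last => /eqP s_eq; apply/eqP/val_inj.
    by have := ltn_ord s; lia.
  have s_eq : s = wid (Ordinal s_lt) by apply: val_inj.
  by exists (Ordinal s_lt); rewrite // inE -s_eq.
rewrite inE => kept_i ->; split => //; apply/eqP => /(congr1 val) /= i_eq.
by have := ltn_ord i; rewrite i_eq ltnn.
Qed.

Lemma minn_card_keep_le_card_cols (j : 'I_N) :
  (minn (r - 1) #|[set s | keep j s]| <= #|cols j|)%N.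
Proof.
rewrite card_keep_split; set Kd := [set i | keep j (wid i)].
have Kd_sub : Kd \subset cols j by apply/subsetP => i; rewrite !inE => ->.
case: (boolP (keep j last_sym)) => [kept_last | _]; last first.
  by rewrite add0n; apply: leq_trans (geq_minr _ _) (subset_leq_card Kd_sub).
case spare_j: (spare j) => [i0|].
  have unkept_i0 : i0 \notin Kd.
    by move: spare_j; rewrite /spare inE; case: pickP => // i + [<-].
  have U_sub : i0 |: Kd \subset cols j.
    by rewrite subUset sub1set Kd_sub !inE kept_last spare_j eqxx orbT.
  apply: leq_trans (geq_minr _ _) (leq_trans _ (subset_leq_card U_sub)).
  by rewrite cardsU1 unkept_i0.
apply: leq_trans (geq_minl _ _) _; rewrite -[X in (X <= _)%N]card_ord.
apply/subset_leq_card/subsetP => i _; rewrite inE.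
by move: spare_j; rewrite /spare; case: pickP => // /(_ i) /negbFE ->.
Qed.

Lemma card_cols_ge (j : 'I_N) :
  (r - 1 <= #|cols j| + (if 1 < #|B j :&: A| then #|B j :&: A| - 1 else 0))%N.
Proof.
have := minn_card_keep_le_card_cols j; have := card_unkept j.
have := cardsC [set s | keep j s]; rewrite card_ord.
by case: (ltnP 1 #|B j :&: A|); lia.
Qed.

Lemma rank_QA : ((r - 1) * N - TA B A <= \rank QA)%N.
Proof.
rewrite leq_subLR /TA big_mkcond /=.
apply: leq_trans (leq_add (leqnn _) sum_card_cols_le_rank).
have -> : ((r - 1) * N = \sum_(j < N) (r - 1))%N by rewrite sum_nat_const card_ord mulnC.
by rewrite -big_split /=; apply: leq_sum => j _; rewrite addnC card_cols_ge.
Qed.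

End RankQA.

Section RankDeficientCount.
Variable F : finFieldType.
Local Notation q := #|F|.

Lemma card_affine_sub T m M (x : 'rV[F]_m) (Y : 'M[F]_(T, m)) (U : 'M[F]_(M, m)) :
  ~~ (col_mx x Y <= U)%MS ->
  (#|[set s : 'rV[F]_T | ((x + s *m Y)%R <= U)%MS]| * q <= q ^ T)%N.
Proof.
move=> not_sub; set D := [set s | _].
have [Y_sub | /row_subPn[i Yi_notin]] := boolP (Y <= U)%MS.
  suff -> : D = set0 by rewrite cards0.
  apply/setP => s; rewrite !inE; apply: contraNF not_sub => xsY_sub.
  rewrite col_mx_sub Y_sub andbT -[x](addrK (s *m Y)).
  by rewrite addmx_sub // eqmx_opp (submx_trans (submxMl _ _) Y_sub).
(* Moving along the i-th coordinate leaves D, so D x F injects into 'rV_T. *)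
pose shift (sa : 'rV[F]_T * F) := sa.1 + sa.2 *: delta_mx 0 i.
have shift_inj : {in setX D [set: F] &, injective shift}.
  move=> [s a] [s' a'] /setXP[/= Ds _] /setXP[/= Ds' _]; rewrite /shift /= => eq_shift.
  suff eq_a : a = a' by move: eq_shift; rewrite eq_a => /addIr ->.
  apply/eqP; apply: contraR Yi_notin => ne_a.
  have diff_sub : ((s - s') *m Y <= U)%MS.
    have -> : (s - s') *m Y = (x + s *m Y) - (x + s' *m Y).
      by rewrite mulmxBl opprD addrACA subrr add0r.
    by rewrite addmx_sub ?eqmx_opp; move: Ds Ds'; rewrite !inE.
  have ss' : s - s' = (a' - a) *: delta_mx 0 i.
    by rewrite scalerBl -[s](addrK (a *: delta_mx 0 i)) eq_shift addrAC [s' + _]addrC addrK.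
  by move: diff_sub; rewrite ss' -scalemxAl -rowE eqmx_scale // subr_eq0 eq_sym.
have := subset_leq_card (subsetT (shift @: setX D [set: F])).
by rewrite card_in_imset // cardsX !cardsT card_mx mul1n.
Qed.

Lemma card_rank_deficient_top_row T m M (x : 'rV[F]_m) (X' : 'M[F]_(M, m))
    (Y : 'M[F]_(T, m)) (S' : 'M[F]_(M, T)) :
  (M.+1 <= \rank (col_mx (col_mx x X') Y))%N -> (M <= \rank (X' + S' *m Y)%R)%N ->
  (#|[set s : 'rV[F]_T | (\rank (col_mx x X' + col_mx s S' *m Y)%R < M.+1)%N]| * q
     <= q ^ T)%N.
Proof.
set U := (X' + S' *m Y)%R => rank_xX'Y rank_U.
have not_sub : ~~ (col_mx x Y <= U)%MS.
  apply: contraTN rank_xX'Y; rewrite col_mx_sub -ltnNge ltnS => /andP[x_sub Y_sub].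
  have X'_sub : (X' <= U)%MS.
    by rewrite -[X'](addrK (S' *m Y)) addmx_sub // eqmx_opp (submx_trans (submxMl _ _) Y_sub).
  apply: leq_trans (rank_leq_row U); apply: mxrankS.
  by rewrite !col_mx_sub x_sub X'_sub Y_sub.
apply: leq_trans (card_affine_sub not_sub); rewrite leq_mul2r; apply/orP; right.
apply/subset_leq_card/subsetP => s; rewrite !inE mul_col_mx add_col_mx.
apply: contraTT; rewrite -leqNgt => xsY_notin.
have U_sub : (U <= col_mx (x + s *m Y) U)%MS by rewrite -addsmxE addsmxSr.
have rank_lt : (\rank U < \rank (col_mx (x + s *m Y) U))%N.
  by rewrite (ltn_leqif (mxrank_leqif_sup U_sub)) col_mx_sub negb_and xsY_notin.
exact: leq_ltn_trans rank_U rank_lt.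
Qed.

Lemma card_rank_deficient T m M (X : 'M[F]_(M, m)) (Y : 'M[F]_(T, m)) :
  (M <= \rank (col_mx X Y))%N ->
  (#|[set S : 'M[F]_(M, T) | (\rank (X + S *m Y)%R < M)%N]| * q <= M * q ^ (M * T))%N.
Proof.
elim: M X => [|M IH] X rank_XY.
  by rewrite (_ : [set S | _] = set0) ?cards0 //; apply/setP => S; rewrite !inE ltn0.
rewrite -[X](vsubmxK (X : 'M_(1 + M, m))) in rank_XY *.
set x := usubmx _ in rank_XY *; set X' := dsubmx _ in rank_XY *.
have rank_X'Y : (M <= \rank (col_mx X' Y))%N.
  by rewrite -ltnS; apply: leq_trans rank_XY (mxrank_col_mx_top_le _ _ _).
have := IH X' rank_X'Y; set bad' := [set S' | _] => card_bad'.
rewrite card_set_sum (reindex (fun sS : 'rV_T * 'M_(M, T) => col_mx sS.1 sS.2)) /=; last first.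
  apply: onW_bij; exists (fun S : 'M_(1 + M, T) => (usubmx S, dsubmx S)).
    by move=> [s S'] /=; rewrite col_mxKu col_mxKd.
  by move=> S; rewrite vsubmxK.
rewrite -(pair_bigA _ (fun s S' =>
  (\rank (col_mx x X' + col_mx s S' *m Y)%R < M.+1 : nat)%N)) /=.
rewrite exchange_big big_distrl /=.
apply: (@leq_trans (\sum_(S' : 'M_(M, T)) ((S' \in bad') * q ^ T * q + q ^ T))%N).
  apply: leq_sum => S' _; rewrite -card_set_sum.
  have [bad_S' | good_S'] := boolP (S' \in bad').
    rewrite mul1n; apply: leq_trans (leq_addr _ _); rewrite leq_mul2r; apply/orP; right.
    by apply: leq_trans (max_card _) _; rewrite card_mx mul1n.
  rewrite mul0n add0n card_rank_deficient_top_row //.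
  by move: good_S'; rewrite inE -leqNgt.
rewrite big_split /= -!big_distrl /= -card_set_sum cardsE sum_nat_const card_mx /=.
move: card_bad'; rewrite -/bad' mulSn expnD.
set b := #|bad'|; set qT := (q ^ T)%N; set qMT := (q ^ (M * T))%N => card_bad'.
have key : (b * qT * q <= M * (qT * qMT))%N.
  by rewrite mulnAC [(qT * _)%N]mulnC mulnA leq_mul2r card_bad' orbT.
by rewrite addnC [(qMT * qT)%N]mulnC; apply: leq_add key.
Qed.

Lemma card_rank_deficient_mulr T m M (X : 'M[F]_(m, M)) (Y : 'M[F]_(m, T)) :
  (M <= \rank (row_mx X Y))%N ->
  (#|[set S : 'M[F]_(T, M) | (\rank (X + Y *m S)%R < M)%N]| * q <= M * T * q ^ (T * M))%N.
Proof.
(* For T = 0 the bound M * q ^ (M * T) is useless, but then no S is bad. *)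
case: T Y => [|T] Y rank_XY.
  rewrite [Y]thinmx0 rank_row_mx0 in rank_XY.
  rewrite (_ : [set S | _] = set0) ?cards0 //; apply/setP => S.
  by rewrite !inE [Y]thinmx0 mul0mx addr0 ltnNge rank_XY.
have := card_rank_deficient (X := X^T) (Y := Y^T).
rewrite -tr_row_mx mxrank_tr => /(_ rank_XY) card_bad.
apply: leq_trans (leq_trans _ card_bad) _; last first.
  by rewrite [(T.+1 * M)%N]mulnC -mulnA leq_mul2l leq_pmull ?orbT.
rewrite leq_mul2r; apply/orP; right.
rewrite -(card_imset _ (@trmx_inj _ _ _)); apply/subset_leq_card/subsetP => St.
case/imsetP => S; rewrite !inE => rank_lt ->.
by rewrite -trmx_mul (_ : X^T + _ = (X + Y *m S)^T) ?mxrank_tr // linearD.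
Qed.

End RankDeficientCount.

Section GeneratorMatrix.
Variables (F : fieldType) (n N k r : nat) (B : 'I_N -> {set 'I_n}).
Local Notation M := (Mdim k r B).
Local Notation T := (Tmax k B).

Definition Gbottom : 'M[F]_((r - 1) * N, T) := \matrix_(p, t) (p == (M + t)%N :> nat)%:R.

Lemma row_mx_Gmat0_Gbottom : row_mx (Gmat (0 : 'M[F]_(T, M))) Gbottom = natid F _ _.
Proof.
apply/matrixP => p c; rewrite !mxE; case: splitP => [c' eq_c | t eq_c]; rewrite !mxE eq_c //.
case: ltnP => [// | le_Mp]; rewrite (_ : (p == c' :> nat) = false).
  by case: insub => [t|] //=; rewrite mxE.
by apply/negbTE; rewrite neq_ltn (leq_trans (ltn_ord c') le_Mp) orbT.
Qed.

Lemma Gmat_decomp (S : 'M[F]_(T, M)) : Gmat S = Gmat 0 + Gbottom *m S.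
Proof.
apply/matrixP => p c; rewrite !mxE.
have [lt_pM | le_Mp] := ltnP p M.
  rewrite big1 ?addr0 // => t _; rewrite mxE (_ : (p == (M + t)%N :> nat) = false) ?mul0r //.
  by apply/negbTE; rewrite neq_ltn (leq_trans lt_pM (leq_addr _ _)).
rewrite (_ : oapp (fun t => (0 : 'M[F]_(T, M)) t c) 0 _ = 0) ?add0r; last first.
  by case: insub => [t|] //=; rewrite mxE.
case: insubP => [t _ eq_t | not_lt] /=.
  rewrite (bigD1 t) //= mxE (_ : (p == (M + t)%N :> nat)) ?mul1r; last by rewrite eq_t subnKC.
  rewrite big1 ?addr0 // => t' ne_t'.
  rewrite mxE (_ : (p == (M + t')%N :> nat) = false) ?mul0r //; apply/negbTE.
  by apply: contra ne_t' => /eqP eq_p; apply/eqP/val_inj; rewrite eq_t eq_p addKn.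
rewrite big1 // => t _; rewrite mxE (_ : (p == (M + t)%N :> nat) = false) ?mul0r //.
by apply/negbTE; apply: contra not_lt => /eqP ->; rewrite addKn.
Qed.

End GeneratorMatrix.

Lemma rank_QA_Gmat0_Gbottom (F : fieldType) n r N k (B : 'I_N -> {set 'I_n})
    (place : 'I_N -> 'I_r -> 'I_n) (A : {set 'I_n}) :
  valid_placement B place -> (#|A| == n - k)%N ->
  (Mdim k r B <= \rank (row_mx (QA F B place A *m Gmat (0 : 'M_(Tmax k B, Mdim k r B)))
                               (QA F B place A *m Gbottom F k r B)))%N.
Proof.
move=> place_valid card_A; have [r0 | r_gt0] := posnP r.
  by apply: (@leq_trans 0); rewrite // leqn0 /Mdim r0.
have le_MT : ((r - 1) * N <= Mdim k r B + Tmax k B)%N by rewrite addnC -leq_subLR.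
rewrite -mul_mx_row row_mx_Gmat0_Gbottom.
apply: leq_trans (mxrankM_maxl _ (natid F _ ((r - 1) * N))).
rewrite -mulmxA mul_natid // mulmx1.
apply: leq_trans (rank_QA F A r_gt0 place_valid); rewrite leq_sub2l //.
exact: leq_bigmax_cond.
Qed.

Lemma card_rank_deficient_QA (F : finFieldType) n r N k (B : 'I_N -> {set 'I_n})
    (place : 'I_N -> 'I_r -> 'I_n) (A : {set 'I_n}) :
  valid_placement B place -> (#|A| == n - k)%N ->
  (#|[set S : 'M[F]_(Tmax k B, Mdim k r B) |
        (\rank (QA F B place A *m Gmat S) < Mdim k r B)%N]| * #|F|
     <= Mdim k r B * Tmax k B * #|F| ^ (Tmax k B * Mdim k r B))%N.
Proof.
move=> place_valid /(rank_QA_Gmat0_Gbottom F place_valid)/card_rank_deficient_mulr.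
apply: leq_trans; rewrite leq_mul2r; apply/orP; right.
apply/subset_leq_card/subsetP => S.
by rewrite !inE Gmat_decomp mulmxDr mulmxA.
Qed.

Unset Implicit Arguments.
Set Strict Implicit.

Theorem mainTheorem4 (F : finFieldType) (n r lam k N : nat)
    (B : 'I_N -> {set 'I_n}) (place : 'I_N -> 'I_r -> 'I_n) :
  is_bibd r lam B -> valid_placement B place -> (k <= n)%N ->
  (#|[set S : 'M[F]_(Tmax k B, Mdim k r B) |
       [exists A : {set 'I_n},
          (#|A| == n - k)%N && (\rank (QA F B place A *m Gmat S) < Mdim k r B)%N]]|
     * #|F|
   <= 'C(n, k) * Tmax k B * Mdim k r B * #|F| ^ (Tmax k B * Mdim k r B))%N
  /\
  (('C(n, k) * Tmax k B * Mdim k r B < #|F|)%N ->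
   exists S : 'M[F]_(Tmax k B, Mdim k r B),
     forall A : {set 'I_n}, #|A| = (n - k)%N ->
       \rank (QA F B place A *m Gmat S) = Mdim k r B).
Proof.
move=> _ place_valid le_kn.
set T := Tmax k B; set M := Mdim k r B; set q := #|F|; set bad := [set S | _].
have card_bad : (#|bad| * q <= 'C(n, k) * T * M * q ^ (T * M))%N.
  have union_bound : (#|bad| <= _)%N := card_exists_le
    (fun A : {set 'I_n} => #|A| == (n - k)%N)
    (fun A (S : 'M[F]_(T, M)) => \rank (QA F B place A *m Gmat S) < M)%N.
  apply: leq_trans (leq_mul union_bound (leqnn q)) _; rewrite big_distrl /=.
  apply: (leq_trans (@leq_sum _ _ _ _ _ (fun A => card_rank_deficient_QA F place_valid))).
  rewrite sum_nat_cond_const card_draws card_ord bin_sub // !mulnA.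
  by rewrite [('C(n, k) * M * T)%N]mulnAC.
split=> // q_gt.
have q_gt0 : (0 < q)%N by apply/card_gt0P; exists 0.
have [S S_good] : exists S, S \notin bad.
  apply: exists_notin_card_lt; rewrite card_mx -(ltn_pmul2r q_gt0).
  by apply: leq_ltn_trans card_bad _; rewrite mulnC ltn_pmul2l // expn_gt0 q_gt0.
exists S => A card_A; apply/eqP; rewrite eqn_leq rank_leq_col leqNgt.
by apply: contra S_good => rank_lt; rewrite inE; apply/existsP; exists A; rewrite card_A eqxx.
Qed.
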